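(* Let $m\ge2$, let $\mathbf A$ be the $(m-1)\times(m-1)$ tridiagonal matrix with $2$ on the diagonal and $-1$ on the sub- and super-diagonals, and let $\mathbf x(\varepsilon)$ be the solution of $e^{-\mathbf x}=\frac{\varepsilon^2}{8}\mathbf A^{-1}\mathbf x$ satisfying $\mathbf x=-2\log(\varepsilon)\mathbf 1-\log|\log\varepsilon|\mathbf 1+2\log(2)\mathbf 1-\log(\mathbf A^{-1}\mathbf 1)+o(1)$. Put $\mathbf w=\mathbf A^{-1}\mathbf x$ and consider the eigenvalue problem for $(\omega^2,\xi)$, $\xi\in\mathbb R^{m-1}\setminus\{0\}$: $$ (2-\omega^2)\xi_j-2\big(w_{j+1}\xi_{j+1}-2w_j\xi_j+w_{j-1}\xi_{j-1}\big)=0,\quad j=1,\dots,m-1, $$ with the convention $w_0\xi_0=w_m\xi_m=0$. Then for sufficiently small $\varepsilon>0$ its $m-1$ eigenvalues can be labelled $\omega_1^2,\dots,\omega_{m-1}^2$ so that $$ \omega_n^2=2+\big(-4\log\varepsilon-2\log|\log\varepsilon|+4\log2\big)\frac{n(n+1)}{2}+\mathcal O(1)\quad\text{as }\varepsilon\to0,\qquad n=1,\dots,m-1 . $$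
   Context: For a vector $\mathbf y$, $\log\mathbf y$ denotes the componentwise logarithm; $\mathbf 1=(1,\dots,1)^T\in\mathbb R^{m-1}$. The values $n(n+1)/2$, $n=1,\dots,m-1$, form the set $\{1,3,6,\dots,m(m-1)/2\}$. *)

From Stdlib Require Import Reals Lra Lia Arith ClassicalEpsilon.
Open Scope R_scope.

(* Vectors in R^(m-1) are functions nat -> R indexed by j = 1..m-1.
   [ext m v] extends v by zero outside 1..m-1 (convention v_0 = v_m = 0). *)
Definition in_range (m j : nat) : Prop := (1 <= j /\ j <= m - 1)%nat.

Definition ext (m : nat) (v : nat -> R) (j : nat) : R :=
  if andb (Nat.leb 1 j) (Nat.leb j (m - 1)) then v j else 0.

Definition Amul (m : nat) (v : nat -> R) (j : nat) : R :=
  2 * ext m v j - ext m v (j - 1)%nat - ext m v (j + 1)%nat.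

Definition Ainv (m : nat) (x : nat -> R) : nat -> R :=
  epsilon (inhabits (fun _ : nat => 0))
    (fun w => forall j, in_range m j -> Amul m w j = x j).

Definition is_eigenvalue (m : nat) (w : nat -> R) (lam : R) : Prop :=
  exists xi : nat -> R,
    (exists j, in_range m j /\ xi j <> 0) /\
    forall j, in_range m j ->
      let wxi := ext m (fun i => w i * xi i) in
      (2 - lam) * xi j - 2 * (wxi (j + 1)%nat - 2 * wxi j + wxi (j - 1)%nat) = 0.

From Stdlib Require Import Reals Lra Lia Arith List Classical ClassicalEpsilon.
Open Scope R_scope.

(* Write w = A^{-1} x and L = -2 log eps - log|log eps| + 2 log 2.
   1. Reduction: for w > 0, the substitution v_j = w_j xi_j turns the eigenvalue
      problem into the three-term recurrence c_j (v_{j+1} - 2 v_j + v_{j-1}) + s v_j = 0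
      with c_j = 2 w_j / L and s = (omega^2 - 2) / L; so omega^2 is an eigenvalue
      iff the shooting solution u (u_0 = 0, u_1 = 1) has u_m(s) = 0.
   2. Unperturbed problem: for c_j = j (m - j) a Newton-series computation gives
      the closed form u_m(s) = m prod_{k=1}^{m-1} (1 - s/(k(k+1))), which changes
      sign quantitatively across each s = n(n+1).
   3. Perturbation: u_m depends Lipschitz-continuously on c, and is a polynomial
      of degree m-1 in s; by the intermediate value theorem and root counting,
      eta-close coefficients give exactly m-1 zeros, each O(eta) from an n(n+1).
   4. The asymptotics of x give |x_j - L| = O(1), hence w = L A^{-1} 1 + O(1) and
      c_j = j (m - j) + O(1/L); scaling back, omega_n^2 = 2 + L n(n+1) + O(1). *)

Fixpoint sumR (f : nat -> R) (n : nat) : R :=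
  match n with O => 0 | S n' => sumR f n' + f n' end.

Lemma sumR_ext f g n : (forall k, (k < n)%nat -> f k = g k) -> sumR f n = sumR g n.
Proof. induction n; simpl; intros H; auto. rewrite IHn; [rewrite H|]; auto; intros; apply H; lia. Qed.

Lemma sumR_minus f g n : sumR (fun k => f k - g k) n = sumR f n - sumR g n.
Proof. induction n; simpl; [lra|rewrite IHn; lra]. Qed.

Lemma sumR_scal a f n : sumR (fun k => a * f k) n = a * sumR f n.
Proof. induction n; simpl; [lra|rewrite IHn; lra]. Qed.

Lemma sumR_lin3 f g h n :
  sumR f n - 2 * sumR g n + sumR h n = sumR (fun k => f k - 2 * g k + h k) n.
Proof. induction n; simpl; lra. Qed.

Lemma sumR_shift f n : sumR f (S n) = f O + sumR (fun k => f (S k)) n.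
Proof. induction n; simpl in *; [lra|rewrite IHn; lra]. Qed.

Lemma sumR_tele h n : sumR (fun k => h k - h (S k)) n = h O - h n.
Proof. induction n; simpl; [lra|rewrite IHn; lra]. Qed.

Lemma sumR_zero n : sumR (fun _ => 0) n = 0.
Proof. induction n; simpl; lra. Qed.

Lemma Rabs_le_inv a b : Rabs a <= b -> - b <= a <= b.
Proof. unfold Rabs; destruct (Rcase_abs a); lra. Qed.

Lemma INR_le_lt a b : (a + 1 <= b)%nat -> INR a + 1 <= INR b.
Proof. intros H. apply le_INR in H. rewrite plus_INR in H. simpl in H. lra. Qed.

(* Real binomial coefficients defined by Pascal's rule, so that
   [binom n k = 0] for [k > n] (unlike Stdlib's factorial formula). *)
Fixpoint binom (n k : nat) : R :=
  match n, k with
  | _, O => 1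
  | O, S _ => 0
  | S n', S k' => binom n' k' + binom n' (S k')
  end.

Lemma binom_gt n k : (n < k)%nat -> binom n k = 0.
Proof.
  revert k; induction n; intros k H; destruct k; try lia; simpl; auto.
  rewrite !IHn; try lia; lra.
Qed.

Lemma binom_0 n : binom n 0 = 1. Proof. destruct n; reflexivity. Qed.

Lemma binom_1 n : binom n 1 = INR n.
Proof. induction n; simpl; auto. rewrite IHn, binom_0. destruct n; simpl; lra. Qed.

Lemma binom_absorb j k : (INR j + 1) * binom j k = (INR k + 1) * binom (S j) (S k).
Proof.
  revert k; induction j; intros k.
  - simpl. destruct k; simpl; lra.
  - destruct k.
    + change (binom (S (S j)) 1) with (binom (S j) 0 + binom (S j) 1).
      rewrite binom_1, !binom_0, S_INR; simpl; lra.
    + change (binom (S (S j)) (S (S k))) with (binom (S j) (S k) + binom (S j) (S (S k))).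
      change (binom (S j) (S k)) with (binom j k + binom j (S k)).
      pose proof (IHj k) as H1. pose proof (IHj (S k)) as H2.
      change (binom (S j) (S k)) with (binom j k + binom j (S k)) in H1.
      rewrite !S_INR in *. nra.
Qed.

Lemma binom_shift n r : (INR n - INR r) * binom n r = (INR r + 1) * binom n (S r).
Proof.
  destruct n.
  - destruct r; simpl; lra.
  - rewrite <- binom_absorb. destruct r.
    + rewrite !binom_0, S_INR; simpl; lra.
    + change (binom (S n) (S r)) with (binom n r + binom n (S r)).
      pose proof (binom_absorb n r) as H.
      change (binom (S n) (S r)) with (binom n r + binom n (S r)) in H.
      rewrite !S_INR in *. lra.
Qed.

(* The shooting solution of the three-term recurrence
     c_k (u_{k+1} - 2 u_k + u_{k-1}) + s u_k = 0,   u_0 = 0, u_1 = 1;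
   [shoot_pair] carries the pair (u_n, u_{n+1}). *)
Fixpoint shoot_pair (c : nat -> R) (s : R) (n : nat) : R * R :=
  match n with
  | O => (0, 1)
  | S n' => let p := shoot_pair c s n' in
            (snd p, 2 * snd p - fst p - s * snd p / c (S n'))
  end.
Definition shoot c s n := fst (shoot_pair c s n).

Lemma shoot_0 c s : shoot c s 0 = 0. Proof. reflexivity. Qed.
Lemma shoot_1 c s : shoot c s 1 = 1. Proof. reflexivity. Qed.
Lemma shoot_SS c s n :
  shoot c s (S (S n)) = 2 * shoot c s (S n) - shoot c s n - s * shoot c s (S n) / c (S n).
Proof. reflexivity. Qed.

(* The unperturbed coefficients c_j = j (m - j), i.e. 2 (A^{-1} 1)_j. *)
Definition cbase (m j : nat) : R := INR j * (INR m - INR j).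

Lemma cbase_ge1 m j : (1 <= j)%nat -> (j + 1 <= m)%nat -> 1 <= cbase m j.
Proof.
  intros H1 H2. unfold cbase. apply le_INR in H1. apply INR_le_lt in H2. simpl in H1. nra.
Qed.

(* Newton coefficients of the unperturbed shooting solution:
   g_{k+1} (k+1)(m-k-1) = g_k (k(k+1) - s). *)
Fixpoint newton_coef (m : nat) (s : R) (k : nat) : R :=
  match k with
  | O => 1
  | S k' => newton_coef m s k' * (INR k' * (INR k' + 1) - s)
            / ((INR k' + 1) * (INR m - INR k' - 1))
  end.

Lemma newton_coef_S m s k : (k + 2 <= m)%nat ->
  newton_coef m s (S k) * ((INR k + 1) * (INR m - INR k - 1))
  = newton_coef m s k * (INR k * (INR k + 1) - s).
Proof.
  intros H. assert (H1 : INR k + 2 <= INR m).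
  { apply le_INR in H. rewrite plus_INR in H. simpl in H. lra. }
  pose proof (pos_INR k). simpl. field. lra.
Qed.

Definition newton_sum (m : nat) (s : R) (j : nat) : R :=
  sumR (fun k => newton_coef m s k * binom j (S k)) m.

Lemma binom_second_diff j k :
  binom (S (S j)) (S (S k)) - 2 * binom (S j) (S (S k)) + binom j (S (S k)) = binom j k.
Proof.
  change (binom (S (S j)) (S (S k))) with (binom (S j) (S k) + binom (S j) (S (S k))).
  change (binom (S j) (S (S k))) with (binom j (S k) + binom j (S (S k))).
  change (binom (S j) (S k)) with (binom j k + binom j (S k)). ring.
Qed.

(* Term-wise form of the recurrence: applying c_{j+1} Delta^2 to the (k+1)-st
   term of the series gives a telescoping difference minus s times the k-th term. *)
Lemma newton_term_rec N s j k : (j + 1 <= N)%nat -> (k < N)%nat ->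
  let g := newton_coef (S N) s in
  let h := fun k => g k * (INR k * (INR k + 1)) * binom (S j) (S k) in
  cbase (S N) (S j) * (g (S k) * binom (S (S j)) (S (S k)) -
    2 * (g (S k) * binom (S j) (S (S k))) + g (S k) * binom j (S (S k)))
  = (h k - h (S k)) - s * (g k * binom (S j) (S k)).
Proof.
  intros Hj Hk g h.
  replace (g (S k) * binom (S (S j)) (S (S k)) - 2 * (g (S k) * binom (S j) (S (S k)))
           + g (S k) * binom j (S (S k)))
    with (g (S k) * (binom (S (S j)) (S (S k)) - 2 * binom (S j) (S (S k))
                     + binom j (S (S k)))) by ring.
  rewrite binom_second_diff. unfold cbase, h.
  pose proof (binom_absorb j k) as A1.
  pose proof (binom_shift (S j) (S k)) as A2.
  pose proof (newton_coef_S (S N) s k ltac:(lia)) as G. fold g in G.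
  rewrite !S_INR in *.
  transitivity (g (S k) * (INR k + 1) * ((INR N + 1 - (INR j + 1)) * binom (S j) (S k))).
  { transitivity (g (S k) * (INR N + 1 - (INR j + 1)) * ((INR j + 1) * binom j k)); [ring|].
    rewrite A1. ring. }
  replace ((INR N + 1 - (INR j + 1)) * binom (S j) (S k))
    with ((INR N + 1 - INR k - 1) * binom (S j) (S k) - (INR k + 1 + 1) * binom (S j) (S (S k)))
    by (rewrite <- A2; ring).
  transitivity (g (S k) * ((INR k + 1) * (INR N + 1 - INR k - 1)) * binom (S j) (S k)
     - g (S k) * (INR k + 1) * (INR k + 1 + 1) * binom (S j) (S (S k))); [ring|].
  rewrite G. ring.
Qed.

(* Summing the term-wise identity: the Newton series satisfies the unperturbed
   recurrence (the boundary terms of the telescoping sum vanish). *)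
Lemma newton_sum_rec m s j : (j + 2 <= m)%nat ->
  cbase m (S j) * (newton_sum m s (S (S j)) - 2 * newton_sum m s (S j) + newton_sum m s j)
  + s * newton_sum m s (S j) = 0.
Proof.
  intros Hm. destruct m as [|N]; [lia|].
  unfold newton_sum. rewrite sumR_lin3, sumR_shift.
  replace (newton_coef (S N) s 0 * binom (S (S j)) 1 - 2 * (newton_coef (S N) s 0 * binom (S j) 1)
           + newton_coef (S N) s 0 * binom j 1)
    with 0 by (rewrite !binom_1, !S_INR; ring).
  rewrite Rplus_0_l, <- sumR_scal,
    (sumR_ext _ _ _ (fun k Hk => newton_term_rec N s j k ltac:(lia) Hk)), sumR_minus, sumR_tele.
  simpl (INR 0). rewrite (binom_gt (S j) (S N)) by lia.
  rewrite sumR_scal. simpl sumR. rewrite !(binom_gt j) by lia. ring.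
Qed.

Lemma newton_sum_0 m s : newton_sum m s 0 = 0.
Proof.
  unfold newton_sum. rewrite (sumR_ext _ (fun _ => 0)), sumR_zero; auto.
  intros k _. simpl. ring.
Qed.

Lemma newton_sum_1 m s : (1 <= m)%nat -> newton_sum m s 1 = 1.
Proof.
  intros H. unfold newton_sum. destruct m; [lia|]. rewrite sumR_shift. simpl newton_coef.
  rewrite (sumR_ext _ (fun _ => 0)), sumR_zero; [simpl; ring|].
  intros k _. rewrite binom_gt by lia. ring.
Qed.

Lemma shoot_cbase_newton m s : forall j, (j + 1 <= m)%nat ->
  shoot (cbase m) s j = newton_sum m s j /\ shoot (cbase m) s (S j) = newton_sum m s (S j).
Proof.
  induction j; intros H.
  - rewrite shoot_0, shoot_1, newton_sum_0, newton_sum_1 by lia. auto.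
  - destruct IHj as [I1 I2]; [lia|]. split; auto.
    rewrite shoot_SS, I1, I2.
    pose proof (newton_sum_rec m s j ltac:(lia)).
    pose proof (cbase_ge1 m (S j) ltac:(lia) ltac:(lia)).
    field_simplify_eq; [|lra]. lra.
Qed.

(* At j = m the terms of the Newton series are t_k = g_k C(m,k+1),
   with t_0 = m and t_{k+1} (k+1)(k+2) = t_k (k(k+1) - s). *)
Fixpoint newton_term (m : nat) (s : R) (k : nat) : R :=
  match k with
  | O => INR m
  | S k' => newton_term m s k' * (INR k' * (INR k' + 1) - s) / ((INR k' + 1) * (INR k' + 2))
  end.

Lemma newton_term_eq m s : forall k, (k < m)%nat ->
  newton_coef m s k * binom m (S k) = newton_term m s k.
Proof.
  induction k; intros H.
  - simpl. rewrite binom_1. ring.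
  - pose proof (IHk ltac:(lia)) as IH.
    pose proof (newton_coef_S m s k ltac:(lia)) as G.
    pose proof (binom_shift m (S k)) as Bs.
    assert (H1 : INR k + 2 <= INR m) by (apply le_INR in H; rewrite !S_INR in H; lra).
    pose proof (pos_INR k).
    apply (Rmult_eq_reg_r ((INR k + 1) * (INR k + 2) * (INR m - INR k - 1)));
      [|repeat apply Rmult_integral_contrapositive_currified; lra].
    change (newton_term m s (S k))
      with (newton_term m s k * (INR k * (INR k + 1) - s) / ((INR k + 1) * (INR k + 2))).
    rewrite S_INR in Bs.
    transitivity ((newton_coef m s (S k) * ((INR k + 1) * (INR m - INR k - 1)))
                  * ((INR k + 1 + 1) * binom m (S (S k)))); [ring|].
    rewrite G, <- Bs, <- IH. field. lra.
Qed.

Fixpoint qprod (s : R) (N : nat) : R :=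
  match N with
  | O => 1
  | S N' => qprod s N' * (1 - s / ((INR N' + 1) * (INR N' + 2)))
  end.

Lemma newton_term_sum m s : forall N,
  sumR (newton_term m s) (S N) = INR m * qprod s N /\
  newton_term m s (S N) = - s * INR m * qprod s N / ((INR N + 1) * (INR N + 2)).
Proof.
  induction N.
  - simpl. split; field.
  - destruct IHN as [I1 I2]. pose proof (pos_INR N).
    split.
    + change (sumR (newton_term m s) (S (S N)))
        with (sumR (newton_term m s) (S N) + newton_term m s (S N)).
      rewrite I1, I2. simpl qprod. rewrite ?S_INR. field. lra.
    + change (newton_term m s (S (S N))) with
        (newton_term m s (S N) * (INR (S N) * (INR (S N) + 1) - s)
         / ((INR (S N) + 1) * (INR (S N) + 2))).
      rewrite I2. simpl qprod. rewrite ?S_INR. field. lra.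
Qed.

Lemma shoot_cbase_closed m s : (2 <= m)%nat -> shoot (cbase m) s m = INR m * qprod s (m - 1).
Proof.
  intros Hm. destruct m as [|m']; [lia|].
  destruct (shoot_cbase_newton (S m') s m' ltac:(lia)) as [_ ->].
  unfold newton_sum. rewrite (sumR_ext _ (newton_term (S m') s)).
  - replace (S m' - 1)%nat with m' by lia. apply newton_term_sum.
  - intros k Hk. apply newton_term_eq; lia.
Qed.

Lemma pronic_gap n1 n2 : (1 <= n1)%nat -> (n1 < n2)%nat ->
  INR n1 * (INR n1 + 1) + 4 <= INR n2 * (INR n2 + 1).
Proof.
  intros H1 H2. apply le_INR in H1. assert (H3 : INR n1 + 1 <= INR n2) by (apply INR_le_lt; lia). simpl in H1.
  assert (0 <= (INR n2 - INR n1 - 1) * (INR n2 + INR n1 + 1)) by (apply Rmult_le_pos; lra).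
  nra.
Qed.

(* Near s = n(n+1), every factor 1 - s/(k(k+1)) with k <> n stays away from 0
   and keeps the sign it has at s = n(n+1), since the k(k+1) are 4-separated. *)
Lemma factor_sign (n k : nat) (s : R) : (1 <= n)%nat -> (1 <= k)%nat -> k <> n ->
  Rabs (s - INR n * (INR n + 1)) <= 1 ->
  1 / (INR k * (INR k + 1)) <= Rabs (1 - s / (INR k * (INR k + 1))) /\
  (1 - s / (INR k * (INR k + 1))) * (1 - INR n * (INR n + 1) / (INR k * (INR k + 1))) > 0.
Proof.
  intros Hn Hk Hkn Hs.
  set (q := INR k * (INR k + 1)). set (p := INR n * (INR n + 1)).
  assert (Hk1 : 1 <= INR k) by (apply le_INR in Hk; simpl in Hk; lra).
  assert (Hn1 : 1 <= INR n) by (apply le_INR in Hn; simpl in Hn; lra).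
  assert (Hq : 0 < q) by (unfold q; nra).
  assert (Hsep : 3 <= Rabs (q - s) /\ (q - s) * (q - p) > 0).
  { apply Rabs_le_inv in Hs. fold p in Hs.
    destruct (Nat.lt_ge_cases n k) as [H|H].
    - assert (4 <= q - p) by (pose proof (pronic_gap n k Hn H); unfold q, p; lra).
      rewrite Rabs_right by lra. split; [lra|apply Rmult_gt_0_compat; lra].
    - assert (q - p <= -4)
        by (pose proof (pronic_gap k n Hk ltac:(lia)); unfold q, p; lra).
      rewrite Rabs_left by lra. split; [lra|].
      replace ((q - s) * (q - p)) with ((s - q) * (p - q)) by ring.
      apply Rmult_gt_0_compat; lra. }
  destruct Hsep as [H1 H2].
  replace (1 - s / q) with ((q - s) * / q) by (field; lra).
  replace (1 - p / q) with ((q - p) * / q) by (field; lra).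
  assert (Hiq : 0 < / q) by (apply Rinv_0_lt_compat; lra).
  split.
  - rewrite Rabs_mult, (Rabs_right (/ q)) by lra. unfold Rdiv. nra.
  - replace ((q - s) * / q * ((q - p) * / q)) with ((q - s) * (q - p) * (/ q * / q)) by ring.
    apply Rmult_gt_0_compat; nra.
Qed.

Lemma qprod_split (n : nat) : (1 <= n)%nat -> forall N, exists (G : R -> R) (kap : R), 0 < kap /\
  (forall s, qprod s N = (if Nat.leb n N then 1 - s / (INR n * (INR n + 1)) else 1) * G s) /\
  (forall s, Rabs (s - INR n * (INR n + 1)) <= 1 ->
     kap <= Rabs (G s) /\ G s * G (INR n * (INR n + 1)) > 0).
Proof.
  intros Hn. induction N.
  - exists (fun _ => 1), 1. split; [lra|]. split.
    + intros s. destruct n; [lia|]. simpl. lra.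
    + intros s _. rewrite Rabs_R1. lra.
  - destruct IHN as (G & kap & Hk & HQ & HG).
    assert (Hp : 0 < INR (S N) * (INR (S N) + 1)) by (rewrite S_INR; pose proof (pos_INR N); nra).
    assert (Hstep : forall s, qprod s (S N) = qprod s N * (1 - s / (INR (S N) * (INR (S N) + 1)))).
    { intros s. simpl qprod. rewrite S_INR. replace (INR N + 1 + 1) with (INR N + 2) by ring. ring. }
    destruct (Nat.eq_dec (S N) n) as [E|E].
    + exists G, kap. split; auto. split; auto.
      intros s. rewrite Hstep, HQ.
      replace (Nat.leb n N) with false by (symmetry; apply Nat.leb_gt; lia).
      replace (Nat.leb n (S N)) with true by (symmetry; apply Nat.leb_le; lia).
      subst n. ring.
    + set (f := fun s => 1 - s / (INR (S N) * (INR (S N) + 1))).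
      exists (fun s => G s * f s), (kap * (1 / (INR (S N) * (INR (S N) + 1)))).
      split; [apply Rmult_lt_0_compat; [lra|unfold Rdiv; rewrite Rmult_1_l; apply Rinv_0_lt_compat; lra]|].
      split.
      * intros s. rewrite Hstep, HQ. unfold f.
        replace (Nat.leb n (S N)) with (Nat.leb n N).
        2:{ destruct (Nat.leb_spec n N); destruct (Nat.leb_spec n (S N)); auto; lia. }
        ring.
      * intros s Hs. destruct (HG s Hs) as [G1 G2].
        destruct (factor_sign n (S N) s Hn ltac:(lia) E Hs) as [F1 F2]. fold (f s) in F1, F2.
        split.
        -- rewrite Rabs_mult. apply Rmult_le_compat; try lra.
           unfold Rdiv; rewrite Rmult_1_l; left; apply Rinv_0_lt_compat; lra.
        -- unfold f in *. apply Rlt_gt.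
           replace (G s * (1 - s / (INR (S N) * (INR (S N) + 1))) *
             (G (INR n * (INR n + 1)) * (1 - INR n * (INR n + 1) / (INR (S N) * (INR (S N) + 1)))))
           with ((G s * G (INR n * (INR n + 1))) * ((1 - s / (INR (S N) * (INR (S N) + 1))) *
             (1 - INR n * (INR n + 1) / (INR (S N) * (INR (S N) + 1))))) by ring.
           apply Rmult_lt_0_compat; lra.
Qed.

Lemma shoot_cbase_sign_change m n : (2 <= m)%nat -> (1 <= n)%nat -> (n + 1 <= m)%nat ->
  exists kap, 0 < kap /\ forall d, 0 < d <= 1 ->
    let c := INR n * (INR n + 1) in
    shoot (cbase m) (c - d) m * shoot (cbase m) (c + d) m < 0 /\
    kap * d <= Rabs (shoot (cbase m) (c - d) m) /\ kap * d <= Rabs (shoot (cbase m) (c + d) m).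
Proof.
  intros Hm Hn Hnm.
  destruct (qprod_split n Hn (m - 1)) as (G & kap & Hk & HQ & HG).
  replace (Nat.leb n (m - 1)) with true in HQ by (symmetry; apply Nat.leb_le; lia).
  assert (Hc : 0 < INR n * (INR n + 1)) by (apply le_INR in Hn; simpl in Hn; nra).
  assert (HM : 2 <= INR m) by (apply le_INR in Hm; simpl in Hm; lra).
  exists (INR m * kap / (INR n * (INR n + 1))). split.
  { unfold Rdiv. apply Rmult_lt_0_compat; [nra|apply Rinv_0_lt_compat; lra]. }
  intros d Hd c. rewrite !shoot_cbase_closed, !HQ by auto. unfold c.
  set (cc := INR n * (INR n + 1)) in *.
  replace (1 - (cc - d) / cc) with (d / cc) by (field; lra).
  replace (1 - (cc + d) / cc) with (- (d / cc)) by (field; lra).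
  assert (H1 : Rabs (cc - d - cc) <= 1)
    by (replace (cc - d - cc) with (- d) by ring; rewrite Rabs_Ropp, Rabs_right; lra).
  assert (H2 : Rabs (cc + d - cc) <= 1)
    by (replace (cc + d - cc) with d by ring; rewrite Rabs_right; lra).
  destruct (HG _ H1) as [A1 A2]. destruct (HG _ H2) as [B1 B2].
  assert (Hdc : 0 < d / cc) by (unfold Rdiv; apply Rmult_lt_0_compat; [lra|apply Rinv_0_lt_compat; lra]).
  assert (GG : G (cc - d) * G (cc + d) > 0).
  { assert (0 < (G (cc - d) * G cc) * (G (cc + d) * G cc)) by (apply Rmult_lt_0_compat; lra).
    assert (0 < G cc * G cc).
    { destruct (Rtotal_order (G cc) 0) as [h|[h|h]]; [nra| rewrite h in A2; lra| nra]. }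
    nra. }
  split; [|split].
  - replace (INR m * (d / cc * G (cc - d)) * (INR m * (- (d / cc) * G (cc + d)))) with
      (- ((INR m * INR m) * ((d / cc) * (d / cc)) * (G (cc - d) * G (cc + d)))) by ring.
    assert (0 < (INR m * INR m) * ((d / cc) * (d / cc)) * (G (cc - d) * G (cc + d))).
    { apply Rmult_lt_0_compat; [apply Rmult_lt_0_compat; apply Rmult_lt_0_compat; lra| lra]. }
    lra.
  - rewrite !Rabs_mult, (Rabs_right (INR m)), (Rabs_right (d / cc)) by lra.
    replace (INR m * kap / cc * d) with (INR m * (d / cc * kap)) by (field; lra).
    apply Rmult_le_compat_l; [lra|]. apply Rmult_le_compat_l; lra.
  - rewrite !Rabs_mult, Rabs_Ropp, (Rabs_right (INR m)), (Rabs_right (d / cc)) by lra.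
    replace (INR m * kap / cc * d) with (INR m * (d / cc * kap)) by (field; lra).
    apply Rmult_le_compat_l; [lra|]. apply Rmult_le_compat_l; lra.
Qed.

Lemma Rabs3 a b c : Rabs (a - b - c) <= Rabs a + Rabs b + Rabs c.
Proof.
  unfold Rminus. eapply Rle_trans; [apply Rabs_triang|].
  eapply Rle_trans; [apply Rplus_le_compat_r, Rabs_triang|]. rewrite !Rabs_Ropp. lra.
Qed.

Lemma Rabs_mul_le a b A B : Rabs a <= A -> Rabs b <= B -> Rabs (a * b) <= A * B.
Proof. intros. rewrite Rabs_mult. apply Rmult_le_compat; auto using Rabs_pos. Qed.

Lemma recurrence_step_stable u0 u1 v0 v1 c cc s B K S eta :
  0 <= B -> 0 <= K -> 0 <= S -> 0 <= eta <= 1/2 -> 1 <= cc -> Rabs (c - cc) <= eta ->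
  Rabs u0 <= B -> Rabs u1 <= B -> Rabs v1 <= B -> Rabs (u0 - v0) <= K * eta ->
  Rabs (u1 - v1) <= K * eta -> Rabs s <= S ->
  Rabs (2 * u1 - u0 - s * u1 / c) <= 3 * B + 2 * S * B /\
  Rabs ((2 * u1 - u0 - s * u1 / c) - (2 * v1 - v0 - s * v1 / cc))
    <= (3 * K + S * (2 * K + 2 * B)) * eta.
Proof.
  intros HB HK HS He Hcc Hc Hu0 Hu1 Hv1 D0 D1 Hs.
  apply Rabs_le_inv in Hc.
  assert (Hi : Rabs (/ c) <= 2).
  { rewrite Rabs_right by (left; apply Rinv_0_lt_compat; lra).
    replace 2 with (/ (1/2)) by field. apply Rinv_le_contravar; lra. }
  assert (Hii : Rabs (/ cc) <= 1).
  { rewrite Rabs_right by (left; apply Rinv_0_lt_compat; lra).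
    rewrite <- Rinv_1. apply Rinv_le_contravar; lra. }
  assert (Hd : Rabs (/ c - / cc) <= 2 * eta).
  { replace (/ c - / cc) with ((cc - c) * (/ c) * (/ cc)) by (field; lra).
    replace (2 * eta) with (eta * 2 * 1) by ring.
    apply Rabs_mul_le; [apply Rabs_mul_le|]; auto.
    rewrite Rabs_minus_sym. apply Rabs_le; lra. }
  split.
  - eapply Rle_trans; [apply Rabs3|].
    assert (Rabs (2 * u1) <= 2 * B) by (apply Rabs_mul_le; auto; rewrite Rabs_right; lra).
    assert (Rabs (s * u1 / c) <= S * B * 2)
      by (unfold Rdiv; apply Rabs_mul_le; [apply Rabs_mul_le|]; auto).
    lra.
  - replace ((2 * u1 - u0 - s * u1 / c) - (2 * v1 - v0 - s * v1 / cc)) with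
      (2 * (u1 - v1) - (u0 - v0) - s * ((u1 - v1) * / c + v1 * (/ c - / cc))) by (field; lra).
    eapply Rle_trans; [apply Rabs3|].
    assert (Rabs (2 * (u1 - v1)) <= 2 * (K * eta))
      by (apply Rabs_mul_le; auto; rewrite Rabs_right; lra).
    assert (Rabs (s * ((u1 - v1) * / c + v1 * (/ c - / cc))) <= S * (K * eta * 2 + B * (2 * eta))).
    { apply Rabs_mul_le; auto. eapply Rle_trans; [apply Rabs_triang|].
      apply Rplus_le_compat; apply Rabs_mul_le; auto. }
    nra.
Qed.

Definition coef_close (m : nat) (c : nat -> R) (eta : R) : Prop :=
  forall i, (1 <= i)%nat -> (i + 1 <= m)%nat -> Rabs (c i - cbase m i) <= eta.

Lemma coef_close_ge m c eta : eta <= 1/2 -> coef_close m c eta ->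
  forall i, (1 <= i)%nat -> (i + 1 <= m)%nat -> 1/2 <= c i.
Proof.
  intros He Hc i H1 H2. pose proof (cbase_ge1 m i H1 H2).
  pose proof (Hc i H1 H2) as Hci. apply Rabs_le_inv in Hci. lra.
Qed.

Lemma shoot_stable_upto m SB : 0 <= SB -> forall j, (j + 1 <= m)%nat ->
  exists B K, 0 <= B /\ 0 <= K /\
  forall c eta s, 0 <= eta <= 1/2 -> coef_close m c eta -> Rabs s <= SB ->
   Rabs (shoot c s j) <= B /\ Rabs (shoot c s (S j)) <= B /\
   Rabs (shoot c s j - shoot (cbase m) s j) <= K * eta /\
   Rabs (shoot c s (S j) - shoot (cbase m) s (S j)) <= K * eta.
Proof.
  intros HS. induction j; intros Hj.
  - exists 1, 0. split; [lra|split; [lra|]]. intros c eta s He Hc Hs.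
    rewrite !shoot_0, !shoot_1, Rminus_0_r, Rminus_diag, Rabs_R0, Rabs_R1. lra.
  - destruct (IHj ltac:(lia)) as (B & K & HB & HK & H).
    exists (3 * B + 2 * SB * B), (3 * K + SB * (2 * K + 2 * B) + K).
    split; [nra|split; [nra|]].
    intros c eta s He Hc Hs.
    assert (Hbase : coef_close m (cbase m) 0)
      by (intros i _ _; rewrite Rminus_diag, Rabs_R0; lra).
    destruct (H (cbase m) 0 s ltac:(lra) Hbase Hs) as (_ & V1 & _ & _).
    destruct (H c eta s He Hc Hs) as (U0 & U1 & D0 & D1).
    rewrite !shoot_SS.
    destruct (recurrence_step_stable (shoot c s j) (shoot c s (S j)) (shoot (cbase m) s j)
       (shoot (cbase m) s (S j)) (c (S j)) (cbase m (S j)) s B K SB eta HB HK HS He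
       (cbase_ge1 m (S j) ltac:(lia) ltac:(lia)) (Hc (S j) ltac:(lia) ltac:(lia))
       U0 U1 V1 D0 D1 Hs) as [E1 E2].
    assert (0 <= SB * B) by nra. assert (0 <= SB * K * eta) by (apply Rmult_le_pos; nra).
    assert (0 <= SB * B * eta) by (apply Rmult_le_pos; nra). assert (0 <= K * eta) by nra.
    repeat split; nra.
Qed.

Lemma shoot_stable m SB : 0 <= SB -> (1 <= m)%nat -> exists K, 0 <= K /\
  forall c eta s, 0 <= eta <= 1/2 -> coef_close m c eta -> Rabs s <= SB ->
   Rabs (shoot c s m - shoot (cbase m) s m) <= K * eta.
Proof.
  intros HS Hm. destruct m; [lia|].
  destruct (shoot_stable_upto (S m) SB HS m ltac:(lia)) as (B & K & HB & HK & H).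
  exists K. split; auto. intros. apply H; auto.
Qed.

(* [poly_fun d f a]: f is a polynomial function of degree at most d whose
   coefficient of x^d is a (Horner form  f x = b + x * g x). *)
Inductive poly_fun : nat -> (R -> R) -> R -> Prop :=
| poly_fun_const f a : (forall x, f x = a) -> poly_fun 0 f a
| poly_fun_horner d f g a b : poly_fun d g a -> (forall x, f x = b + x * g x) ->
    poly_fun (S d) f a.

Lemma poly_fun_ext d f g a : poly_fun d f a -> (forall x, g x = f x) -> poly_fun d g a.
Proof.
  intros H E. destruct H.
  - apply poly_fun_const. intros; rewrite E; auto.
  - eapply poly_fun_horner; eauto. intros; rewrite E; auto.
Qed.

Lemma poly_fun_lift d : forall f a, poly_fun d f a -> poly_fun (S d) f 0.
Proof.
  induction d; intros f a H.
  - inversion H as [? ? E|]; subst.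
    apply (poly_fun_horner 0 f (fun _ => 0) 0 a); [apply poly_fun_const; auto|].
    intros; rewrite E; ring.
  - inversion H as [|? ? g ? b G E]; subst.
    apply (poly_fun_horner (S d) f g 0 b); auto. eapply IHd; eauto.
Qed.

Lemma poly_fun_add d : forall f g a b, poly_fun d f a -> poly_fun d g b ->
  poly_fun d (fun x => f x + g x) (a + b).
Proof.
  induction d; intros f g a b Hf Hg.
  - inversion Hf as [? ? E1|]; inversion Hg as [? ? E2|]; subst.
    apply poly_fun_const. intros; rewrite E1, E2; auto.
  - inversion Hf as [|? ? g1 ? b1 G1 E1]; inversion Hg as [|? ? g2 ? b2 G2 E2]; subst.
    apply (poly_fun_horner d _ (fun x => g1 x + g2 x) _ (b1 + b2)); [apply IHd; auto|].
    intros. rewrite E1, E2. ring.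
Qed.

Lemma poly_fun_scal d : forall f a k, poly_fun d f a -> poly_fun d (fun x => k * f x) (k * a).
Proof.
  induction d; intros f a k Hf.
  - inversion Hf as [? ? E|]; subst. apply poly_fun_const. intros; rewrite E; auto.
  - inversion Hf as [|? ? g ? b G E]; subst.
    apply (poly_fun_horner d _ (fun x => k * g x) _ (k * b)); [apply IHd; auto|].
    intros; rewrite E; ring.
Qed.

Lemma poly_fun_mulX d f a : poly_fun d f a -> poly_fun (S d) (fun x => x * f x) a.
Proof. intros H. apply (poly_fun_horner d _ f a 0); auto. intros; ring. Qed.

Lemma poly_fun_factor d : forall f a, poly_fun (S d) f a -> forall r,
  exists g, poly_fun d g a /\ forall x, f x - f r = (x - r) * g x.
Proof.
  induction d; intros f a H r; inversion H as [|? ? g ? b G E0]; subst.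
  - inversion G as [? ? E1|]; subst. exists (fun _ => a). split; [apply poly_fun_const; auto|].
    intros. rewrite !E0, !E1. ring.
  - destruct (IHd g a G r) as (h & Hh & E).
    exists (fun x => g r + x * h x). split.
    + apply (poly_fun_horner d _ h a (g r)); auto.
    + intros x. rewrite !E0.
      replace (b + x * g x - (b + r * g r)) with (x * (g x - g r) + (x - r) * g r) by ring.
      rewrite E. ring.
Qed.

Lemma poly_fun_roots d : forall f a, poly_fun d f a -> a <> 0 -> forall l, NoDup l ->
  (forall r, In r l -> f r = 0) -> (length l <= d)%nat.
Proof.
  induction d; intros f a H Ha l Hl Hr.
  - inversion H as [? ? E0|]; subst. destruct l as [|r l]; simpl; auto.
    exfalso. apply Ha. rewrite <- (E0 r). apply Hr. left; auto.
  - destruct l as [|r l]; simpl; [lia|].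
    destruct (poly_fun_factor d f a H r) as (g & Hg & E).
    inversion Hl as [|? ? Hn Hnd]; subst.
    enough (length l <= d)%nat by lia.
    apply (IHd g a Hg Ha l Hnd). intros r' Hr'.
    assert (r' <> r) by (intro; subst; auto).
    pose proof (E r') as E'. rewrite (Hr r'), (Hr r) in E' by (simpl; auto).
    assert (Z : (r' - r) * g r' = 0) by lra.
    apply Rmult_integral in Z. destruct Z; auto. lra.
Qed.

Lemma poly_fun_roots_exhaust d f a (r : nat -> R) : poly_fun d f a -> a <> 0 ->
  (forall n1 n2, (1 <= n1 <= d)%nat -> (1 <= n2 <= d)%nat -> r n1 = r n2 -> n1 = n2) ->
  (forall n, (1 <= n <= d)%nat -> f (r n) = 0) ->
  forall s, f s = 0 -> exists n, (1 <= n <= d)%nat /\ s = r n.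
Proof.
  intros Hf Ha Hinj Hr s Hs.
  apply NNPP. intros Hno.
  assert (Hnd : NoDup (s :: map r (seq 1 d))).
  { constructor.
    - intros Hin. apply in_map_iff in Hin. destruct Hin as (n & Hn & Hin).
      apply in_seq in Hin. apply Hno. exists n. split; [lia|auto].
    - apply NoDup_map_NoDup_ForallPairs; [|apply seq_NoDup].
      intros n1 n2 H1 H2. apply in_seq in H1. apply in_seq in H2. apply Hinj; lia. }
  pose proof (poly_fun_roots d f a Hf Ha _ Hnd) as Hlen.
  enough (length (s :: map r (seq 1 d)) <= d)%nat
    by (simpl in *; rewrite length_map, length_seq in *; lia).
  apply Hlen. intros x [<-|Hx]; auto.
  apply in_map_iff in Hx. destruct Hx as (n & <- & Hin). apply in_seq in Hin. apply Hr. lia.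
Qed.

Lemma poly_fun_continuous d : forall f a, poly_fun d f a -> continuity f.
Proof.
  induction d; intros f a H.
  - inversion H as [? ? E0|]; subst.
    intros x. apply (continuity_pt_locally_ext (fct_cte a) f 1 x); [lra|intros; rewrite E0; auto|].
    apply continuity_pt_const. intros ? ?; auto.
  - inversion H as [|? ? g ? b G E0]; subst.
    intros x. apply (continuity_pt_locally_ext (plus_fct (fct_cte b) (mult_fct id g)) f 1 x);
      [lra|intros; rewrite E0; auto|].
    apply continuity_pt_plus; [apply continuity_pt_const; intros ? ?; auto|].
    apply continuity_pt_mult; [apply derivable_continuous_pt, derivable_pt_id|].
    apply (IHd g a G).
Qed.

Lemma shoot_poly m c : (forall i, (1 <= i)%nat -> (i + 1 <= m)%nat -> c i <> 0) ->
  forall j, (j + 1 <= m)%nat -> exists a, a <> 0 /\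
    poly_fun j (fun s => shoot c s (S j)) a /\ poly_fun j (fun s => shoot c s j) 0.
Proof.
  intros Hc. induction j; intros Hj.
  - exists 1. split; [lra|]. split; apply poly_fun_const; reflexivity.
  - destruct (IHj ltac:(lia)) as (a & Ha & P1 & P0).
    assert (Hcj : c (S j) <> 0) by (apply Hc; lia).
    exists (- / c (S j) * a). split.
    + apply Rmult_integral_contrapositive. split; auto.
      apply Ropp_neq_0_compat, Rinv_neq_0_compat; auto.
    + split; [|eapply poly_fun_lift; eauto].
      assert (A : poly_fun j (fun s => 2 * shoot c s (S j) + (-1) * shoot c s j) (2 * a + (-1) * 0))
        by (apply poly_fun_add; apply poly_fun_scal; auto).
      apply poly_fun_lift in A.
      assert (B : poly_fun (S j) (fun s => s * (- / c (S j) * shoot c s (S j))) (- / c (S j) * a))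
        by (apply poly_fun_mulX, poly_fun_scal; auto).
      pose proof (poly_fun_add _ _ _ _ _ A B) as C. rewrite Rplus_0_l in C.
      eapply poly_fun_ext; [apply C|]. intros s. rewrite shoot_SS. field. auto.
Qed.

Lemma ext_in m v j : in_range m j -> ext m v j = v j.
Proof.
  intros [H1 H2]. unfold ext. apply Nat.leb_le in H1. apply Nat.leb_le in H2.
  rewrite H1, H2. reflexivity.
Qed.

Lemma ext_0 m v : ext m v 0 = 0. Proof. reflexivity. Qed.

Lemma ext_m m v : (1 <= m)%nat -> ext m v m = 0.
Proof.
  intros H. unfold ext. replace (Nat.leb m (m - 1)) with false.
  - destruct (Nat.leb 1 m); reflexivity.
  - symmetry. apply Nat.leb_gt. lia.
Qed.

Lemma ext_all m v j : (j <= m)%nat -> v 0%nat = 0 -> v m = 0 -> ext m v j = v j.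
Proof.
  intros Hj H0 Hm. destruct j; [rewrite ext_0; auto|].
  destruct (Nat.eq_dec (S j) m) as [E|E].
  - rewrite <- E in *. rewrite ext_m by lia. auto.
  - apply ext_in. split; lia.
Qed.

Fixpoint second_sum_pair (y : nat -> R) (n : nat) : R * R :=
  match n with
  | O => (0, 0)
  | S n' => let p := second_sum_pair y n' in (snd p, 2 * snd p - fst p - y (S n'))
  end.
Definition second_sum y n := fst (second_sum_pair y n).

Lemma second_sum_SS y n :
  second_sum y (S (S n)) = 2 * second_sum y (S n) - second_sum y n - y (S n).
Proof. reflexivity. Qed.

(* Explicit solution of A w = y: correct z_j by a linear term so that w_m = 0. *)
Definition Asol m y j := second_sum y j - INR j * second_sum y m / INR m.

Lemma Asol_spec m y : (2 <= m)%nat -> forall j, in_range m j -> Amul m (Asol m y) j = y j.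
Proof.
  intros Hm j [H1 H2].
  assert (HM : 0 < INR m) by (apply lt_0_INR; lia).
  assert (S0 : Asol m y 0 = 0) by (unfold Asol, second_sum; simpl; unfold Rdiv; ring).
  assert (Sm : Asol m y m = 0) by (unfold Asol; field; lra).
  unfold Amul. destruct j as [|j]; [lia|].
  rewrite !ext_all by (auto; lia).
  replace (S j - 1)%nat with j by lia. replace (S j + 1)%nat with (S (S j)) by lia.
  unfold Asol. rewrite second_sum_SS, !S_INR. field. lra.
Qed.

Lemma Amul_lin m a f g j : Amul m (fun i => a * f i + g i) j = a * Amul m f j + Amul m g j.
Proof.
  unfold Amul, ext.
  destruct (Nat.leb 1 j && Nat.leb j (m - 1))%bool;
  destruct (Nat.leb 1 (j - 1) && Nat.leb (j - 1) (m - 1))%bool;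
  destruct (Nat.leb 1 (j + 1) && Nat.leb (j + 1) (m - 1))%bool; ring.
Qed.

(* A is injective: a difference e with A e = 0 and e_0 = 0 is linear,
   e_i = i e_1, and e_m = 0 forces e = 0. *)
Lemma Amul_inj m w w' : (2 <= m)%nat ->
  (forall j, in_range m j -> Amul m w j = Amul m w' j) ->
  forall j, in_range m j -> w j = w' j.
Proof.
  intros Hm H.
  set (e := fun i => ext m w i - ext m w' i).
  assert (He : forall i, (i + 1 <= m)%nat -> e i = INR i * e 1%nat /\ e (S i) = INR (S i) * e 1%nat).
  { induction i; intros Hi.
    - unfold e. rewrite !ext_0. simpl. split; ring.
    - destruct IHi as [I0 I1]; [lia|]. split; auto.
      pose proof (H (S i) ltac:(split; lia)) as E. unfold Amul in E.
      replace (S i - 1)%nat with i in E by lia. replace (S i + 1)%nat with (S (S i)) in E by lia.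
      assert (e (S (S i)) = 2 * e (S i) - e i) by (unfold e; lra).
      rewrite H0, I0, I1, !S_INR. ring. }
  assert (E1 : e 1%nat = 0).
  { destruct m as [|m']; [lia|]. destruct (He m' ltac:(lia)) as [_ Em].
    unfold e at 1 in Em. rewrite !ext_m in Em by lia.
    assert (0 < INR (S m')) by (apply lt_0_INR; lia). nra. }
  intros j Hj. destruct (He j ltac:(destruct Hj; lia)) as [Ej _].
  rewrite E1, Rmult_0_r in Ej. unfold e in Ej. rewrite !ext_in in Ej by auto. lra.
Qed.

Lemma Ainv_spec m y : (2 <= m)%nat -> forall j, in_range m j -> Amul m (Ainv m y) j = y j.
Proof.
  intros Hm. unfold Ainv. apply epsilon_spec. exists (Asol m y). apply Asol_spec; auto.
Qed.

Lemma Ainv_eq m y w : (2 <= m)%nat -> (forall j, in_range m j -> Amul m w j = y j) ->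
  forall j, in_range m j -> Ainv m y j = w j.
Proof.
  intros Hm H. apply Amul_inj; auto. intros j Hj. rewrite Ainv_spec, H; auto.
Qed.

Lemma second_sum_bound m y M : 0 <= M -> (forall i, in_range m i -> Rabs (y i) <= M) ->
  forall n, (n + 1 <= m)%nat -> Rabs (second_sum y (S n) - second_sum y n) <= INR n * M /\
     Rabs (second_sum y (S n)) <= INR (S n) * INR (S n) * M.
Proof.
  intros HM Hy. induction n; intros Hn.
  - unfold second_sum; simpl. rewrite Rminus_0_r, Rabs_R0. lra.
  - destruct IHn as [I1 I2]; [lia|].
    assert (D : Rabs (second_sum y (S (S n)) - second_sum y (S n)) <= INR (S n) * M).
    { rewrite second_sum_SS.
      replace (2 * second_sum y (S n) - second_sum y n - y (S n) - second_sum y (S n))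
        with ((second_sum y (S n) - second_sum y n) - y (S n)) by ring.
      eapply Rle_trans; [apply Rabs_triang|]. rewrite Rabs_Ropp.
      pose proof (Hy (S n) ltac:(split; lia)). rewrite S_INR. lra. }
    split; auto.
    replace (second_sum y (S (S n)))
      with ((second_sum y (S (S n)) - second_sum y (S n)) + second_sum y (S n)) by ring.
    eapply Rle_trans; [apply Rabs_triang|].
    pose proof (pos_INR n). rewrite !S_INR in *. nra.
Qed.

Lemma Ainv_bound m y M : (2 <= m)%nat -> 0 <= M -> (forall i, in_range m i -> Rabs (y i) <= M) ->
  forall j, in_range m j -> Rabs (Ainv m y j) <= 2 * INR m * INR m * M.
Proof.
  intros Hm HM Hy j Hj. rewrite (Ainv_eq m y (Asol m y)) by (auto; apply Asol_spec; auto).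
  assert (Zb : forall n, (n <= m)%nat -> Rabs (second_sum y n) <= INR m * INR m * M).
  { intros n Hn. destruct n; [unfold second_sum; simpl; rewrite Rabs_R0; nra|].
    destruct (second_sum_bound m y M HM Hy n ltac:(lia)) as [_ B].
    apply le_INR in Hn. pose proof (pos_INR (S n)). eapply Rle_trans; [apply B|].
    apply Rmult_le_compat_r; auto. apply Rmult_le_compat; lra. }
  destruct Hj as [H1 H2].
  assert (HMp : 0 < INR m) by (apply lt_0_INR; lia).
  assert (Hjm : INR j <= INR m) by (apply le_INR; lia).
  pose proof (pos_INR j). pose proof (Zb j ltac:(lia)). pose proof (Zb m ltac:(lia)).
  assert (Rabs (INR j * second_sum y m / INR m) <= INR m * INR m * M).
  { replace (INR j * second_sum y m / INR m) with ((INR j / INR m) * second_sum y m)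
      by (field; lra).
    assert (0 <= INR j / INR m <= 1).
    { split; [unfold Rdiv; apply Rmult_le_pos; [lra|left; apply Rinv_0_lt_compat; lra]|].
      apply (Rmult_le_reg_r (INR m)); auto. field_simplify; lra. }
    rewrite Rabs_mult, (Rabs_right (INR j / INR m)) by lra.
    pose proof (Rabs_pos (second_sum y m)). nra. }
  unfold Asol, Rminus. eapply Rle_trans; [apply Rabs_triang|]. rewrite Rabs_Ropp. lra.
Qed.

Definition Ainv_one_vec (m j : nat) : R := INR j * (INR m - INR j) / 2.

Lemma Ainv_one m : (2 <= m)%nat -> forall j, in_range m j -> Ainv m (fun _ => 1) j = Ainv_one_vec m j.
Proof.
  intros Hm. apply Ainv_eq; auto. intros j [H1 H2].
  unfold Amul. destruct j as [|j]; [lia|].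
  rewrite !ext_all by (unfold Ainv_one_vec; simpl; try lia; try lra; ring).
  replace (S j - 1)%nat with j by lia. replace (S j + 1)%nat with (S (S j)) by lia.
  unfold Ainv_one_vec. rewrite !S_INR. field.
Qed.

Lemma Ainv_near_const m y L M : (2 <= m)%nat -> 0 <= M ->
  (forall i, in_range m i -> Rabs (y i - L) <= M) ->
  forall j, in_range m j -> Rabs (Ainv m y j - L * Ainv_one_vec m j) <= 2 * INR m * INR m * M.
Proof.
  intros Hm HM Hy j Hj.
  replace (Ainv m y j - L * Ainv_one_vec m j) with (Ainv m (fun i => y i - L) j).
  - apply Ainv_bound; auto.
  - rewrite <- (Ainv_one m Hm j Hj).
    enough (Ainv m y j = L * Ainv m (fun _ => 1) j + Ainv m (fun i => y i - L) j) by lra.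
    apply (Ainv_eq m y (fun i => L * Ainv m (fun _ => 1) i + Ainv m (fun i => y i - L) i));
      auto. intros i Hi.
    rewrite Amul_lin, !Ainv_spec by auto. ring.
Qed.

(* For positive weights w, the substitution v_j = w_j xi_j turns the eigenvalue
   equation into  c_j (v_{j+1} - 2 v_j + v_{j-1}) + s v_j = 0  with
   c_j = 2 w_j / L, s = (lam - 2) / L; hence v = v_1 * shoot c s. *)
Lemma eigen_equation_shoot m w L lam xi : 0 < L -> (forall j, in_range m j -> 0 < w j) ->
  (forall j, in_range m j ->
     let wxi := ext m (fun i => w i * xi i) in
     (2 - lam) * xi j - 2 * (wxi (j + 1)%nat - 2 * wxi j + wxi (j - 1)%nat) = 0) ->
  let v := ext m (fun i => w i * xi i) in
  forall i, (i + 1 <= m)%nat ->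
    v i = v 1%nat * shoot (fun k => 2 * w k / L) ((lam - 2) / L) i /\
    v (S i) = v 1%nat * shoot (fun k => 2 * w k / L) ((lam - 2) / L) (S i).
Proof.
  intros HL Hw Heq v. induction i; intros Hi.
  - rewrite shoot_0, shoot_1. unfold v. rewrite ext_0. split; ring.
  - destruct IHi as [I0 I1]; [lia|]. split; auto.
    assert (R1 : in_range m (S i)) by (split; lia).
    pose proof (Heq _ R1) as E. cbv zeta in E. fold v in E.
    replace (S i - 1)%nat with i in E by lia. replace (S i + 1)%nat with (S (S i)) in E by lia.
    specialize (Hw _ R1).
    assert (Ex : xi (S i) = v (S i) / w (S i)) by (unfold v; rewrite ext_in by auto; field; lra).
    rewrite Ex in E.
    assert (Hnext : v (S (S i)) = 2 * v (S i) - v i + (2 - lam) * v (S i) / (2 * w (S i))).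
    { field_simplify_eq; [|lra]. field_simplify_eq in E; [|lra]. lra. }
    rewrite Hnext, I0, I1, shoot_SS. field. lra.
Qed.

Lemma eigenvalue_iff_shoot m w L lam : (2 <= m)%nat -> 0 < L ->
  (forall j, in_range m j -> 0 < w j) ->
  is_eigenvalue m w lam <-> shoot (fun i => 2 * w i / L) ((lam - 2) / L) m = 0.
Proof.
  intros Hm HL Hw. set (c := fun i => 2 * w i / L). set (s := (lam - 2) / L).
  split.
  - intros (xi & (j0 & Hj0 & Hxi) & Heq).
    pose proof (eigen_equation_shoot m w L lam xi HL Hw Heq) as Hv. cbv zeta in Hv. fold c s in Hv.
    set (v := ext m (fun i => w i * xi i)) in Hv.
    destruct m as [|m']; [lia|].
    destruct (Hv m' ltac:(lia)) as [_ Hm'].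
    unfold v at 1 in Hm'. rewrite ext_m in Hm' by lia.
    destruct (Req_dec (shoot c s (S m')) 0) as [E|E]; auto. exfalso.
    assert (V1 : v 1%nat = 0) by (apply (Rmult_eq_reg_r (shoot c s (S m'))); auto; lra).
    destruct (Hv j0 ltac:(destruct Hj0; lia)) as [Hj _]. rewrite V1, Rmult_0_l in Hj.
    unfold v in Hj. rewrite ext_in in Hj by auto.
    apply Hxi. specialize (Hw j0 Hj0).
    apply Rmult_integral in Hj. destruct Hj; auto. lra.
  - intros Hm0.
    exists (fun i => shoot c s i / w i). split.
    + exists 1%nat. split; [split; lia|]. rewrite shoot_1.
      specialize (Hw 1%nat ltac:(split; lia)).
      apply Rmult_integral_contrapositive; split; [lra|]. apply Rinv_neq_0_compat; lra.
    + intros j Hj. cbv zeta.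
      assert (E : forall i, (i <= m)%nat -> ext m (fun i => w i * (shoot c s i / w i)) i = shoot c s i).
      { intros i Hi. destruct i; [rewrite ext_0, shoot_0; auto|].
        destruct (Nat.eq_dec (S i) m) as [E|E].
        - rewrite <- E at 1. rewrite ext_m by lia. rewrite E. auto.
        - rewrite ext_in by (split; lia). field. apply Rgt_not_eq, Hw. split; lia. }
      destruct Hj as [H1 H2]. destruct j as [|j]; [lia|].
      rewrite !E by lia.
      replace (S j - 1)%nat with j by lia. replace (S j + 1)%nat with (S (S j)) by lia.
      rewrite shoot_SS. unfold c.
      replace lam with (s * L + 2) by (unfold s; field; lra).
      specialize (Hw (S j) ltac:(split; lia)). field. lra.
Qed.

Lemma finite_min m (P : nat -> R -> Prop) :
  (forall n k k', 0 < k' <= k -> P n k -> P n k') ->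
  (forall n, in_range m n -> exists k, 0 < k /\ P n k) ->
  exists k, 0 < k /\ forall n, in_range m n -> P n k.
Proof.
  intros Hmon H.
  assert (G : forall N, exists k, 0 < k /\ forall n, (n <= N)%nat -> in_range m n -> P n k).
  { induction N.
    - exists 1. split; [lra|]. intros n Hn [Hr _]. lia.
    - destruct IHN as (k & Hk & HP).
      destruct (le_lt_dec (S N) (m - 1)) as [Hle|Hgt].
      + destruct (H (S N) ltac:(split; lia)) as (k' & Hk' & HP').
        pose proof (Rmin_l k k'). pose proof (Rmin_r k k').
        assert (0 < Rmin k k') by (apply Rmin_pos; lra).
        exists (Rmin k k'). split; auto. intros n Hn Hr.
        destruct (Nat.eq_dec n (S N)) as [->|E].
        * apply (Hmon _ k'); auto; lra.
        * apply (Hmon _ k); [lra|]. apply HP; auto; lia.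
      + exists k. split; auto. intros n Hn [Hr1 Hr2]. apply HP; [lia|split; lia]. }
  destruct (G (m - 1)%nat) as (k & Hk & HP). exists k. split; auto.
  intros n Hn. apply HP; auto. destruct Hn; lia.
Qed.

Lemma IVT_perturbed (f g : R -> R) a b : continuity f -> a <= b -> g a * g b < 0 ->
  Rabs (f a - g a) < Rabs (g a) -> Rabs (f b - g b) < Rabs (g b) ->
  exists z, a <= z <= b /\ f z = 0.
Proof.
  intros Hf Hab Hg Ha Hb.
  assert (same_sign : forall u v, Rabs (u - v) < Rabs v -> u * v > 0)
    by (intros u v; unfold Rabs; destruct (Rcase_abs (u - v)); destruct (Rcase_abs v); intros; nra).
  pose proof (same_sign _ _ Ha). pose proof (same_sign _ _ Hb).
  assert (f a * f b <= 0).
  { assert ((f a * g a) * (f b * g b) > 0) by (apply Rmult_gt_0_compat; lra).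
    replace ((f a * g a) * (f b * g b)) with ((f a * f b) * (g a * g b)) in * by ring.
    nra. }
  destruct (IVT_cor f a b Hf Hab ltac:(lra)) as (z & Hz & Hz0). eauto.
Qed.

Lemma choose_in_range m (P : nat -> R -> Prop) :
  (forall n, in_range m n -> exists s, P n s) ->
  exists f : nat -> R, forall n, in_range m n -> P n (f n).
Proof.
  intros H. exists (fun n => epsilon (inhabits 0) (fun s => in_range m n -> P n s)).
  intros n Hn. apply (epsilon_spec (inhabits 0) (fun s => in_range m n -> P n s)); auto.
  destruct (H n Hn) as (s & Hs). exists s. auto.
Qed.

Lemma shoot_cbase_sign_change_uniform m : (2 <= m)%nat -> exists kap, 0 < kap /\
  forall n, in_range m n -> forall d, 0 < d <= 1 ->
    let cn := INR n * (INR n + 1) in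
    shoot (cbase m) (cn - d) m * shoot (cbase m) (cn + d) m < 0 /\
    kap * d <= Rabs (shoot (cbase m) (cn - d) m) /\ kap * d <= Rabs (shoot (cbase m) (cn + d) m).
Proof.
  intros Hm. apply finite_min.
  - intros n k k' Hk HP d Hd. cbv zeta in *. destruct (HP d Hd) as (A & B1 & B2).
    assert (k' * d <= k * d) by (apply Rmult_le_compat_r; lra). repeat split; auto; lra.
  - intros n [H1 H2]. apply shoot_cbase_sign_change; auto; lia.
Qed.

(* Existence: for eta-close coefficients, u_m has a zero within K eta of each
   n(n+1), because the unperturbed sign change (of size kap * K eta) dominates
   the Lipschitz error (of size Kl * eta). *)
Lemma perturbed_zeros_exist m : (2 <= m)%nat -> exists K eta0,
  0 < K /\ 0 < eta0 <= 1/2 /\ K * eta0 <= 1/2 /\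
  forall c eta, 0 < eta <= eta0 -> coef_close m c eta ->
  forall n, in_range m n ->
    exists s, Rabs (s - INR n * (INR n + 1)) <= K * eta /\ shoot c s m = 0.
Proof.
  intros Hm.
  assert (HM : 2 <= INR m) by (apply le_INR in Hm; simpl in Hm; lra).
  destruct (shoot_cbase_sign_change_uniform m Hm) as (kap & Hkap & Hsign).
  set (SB := INR m * INR m + 1).
  destruct (shoot_stable m SB ltac:(unfold SB; nra) ltac:(lia)) as (Kl & HKl & Hlip).
  set (K := 2 * (Kl + 1) / kap).
  assert (HK : 0 < K) by (unfold K; apply Rdiv_lt_0_compat; lra).
  set (eta0 := Rmin (1/2) (1 / (2 * K))).
  assert (Heta0 : 0 < eta0 <= 1/2)
    by (split; [apply Rmin_pos; [lra|apply Rdiv_lt_0_compat; lra]|apply Rmin_l]).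
  assert (HKeta0 : K * eta0 <= 1/2).
  { pose proof (Rmin_r (1/2) (1 / (2 * K))). fold eta0 in H.
    apply (Rmult_le_compat_l K) in H; [|lra].
    replace (K * (1 / (2 * K))) with (1/2) in H by (field; lra). lra. }
  exists K, eta0. split; [auto|split; [auto|split; [auto|]]].
  intros c eta [Heta_pos Heta] Hc n Hn.
  set (delta := K * eta).
  assert (Hdelta : 0 < delta <= 1/2).
  { unfold delta. split; [nra|]. apply Rmult_le_compat_l with (r := K) in Heta; lra. }
  destruct (Hsign n Hn delta ltac:(lra)) as (S1 & S2 & S3).
  set (cn := INR n * (INR n + 1)) in *.
  assert (Hcn : 0 <= cn <= INR m * INR m).
  { destruct Hn as [H1 H2]. unfold cn. pose proof (pos_INR n).
    assert (INR n + 1 <= INR m) by (apply INR_le_lt; lia). nra. }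
  assert (Hs1 : Rabs (cn - delta) <= SB) by (apply Rabs_le; unfold SB; lra).
  assert (Hs2 : Rabs (cn + delta) <= SB) by (apply Rabs_le; unfold SB; lra).
  pose proof (Hlip c eta (cn - delta) ltac:(lra) Hc Hs1) as D1.
  pose proof (Hlip c eta (cn + delta) ltac:(lra) Hc Hs2) as D2.
  assert (KD : Kl * eta < kap * delta).
  { unfold delta, K. replace (kap * (2 * (Kl + 1) / kap * eta)) with (2 * (Kl + 1) * eta)
      by (field; lra). nra. }
  assert (Hcnz : forall i, (1 <= i)%nat -> (i + 1 <= m)%nat -> c i <> 0)
    by (intros i H1 H2; pose proof (coef_close_ge m c eta ltac:(lra) Hc i H1 H2); lra).
  destruct (shoot_poly m c Hcnz (m - 1) ltac:(lia)) as (a & _ & Hpoly & _).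
  replace (S (m - 1)) with m in Hpoly by lia.
  destruct (IVT_perturbed (fun s => shoot c s m) (fun s => shoot (cbase m) s m)
    (cn - delta) (cn + delta) (poly_fun_continuous _ _ _ Hpoly) ltac:(lra) S1
    ltac:(lra) ltac:(lra)) as (z & Hz & Hz0).
  exists z. split; auto. apply Rabs_le. lra.
Qed.

(* Exhaustion: zeros sr n within 1/2 of the distinct n(n+1) are m-1 distinct
   zeros of the degree-(m-1) polynomial u_m, hence all of its zeros. *)
Lemma perturbed_zeros_exhaust m c (sr : nat -> R) : (2 <= m)%nat ->
  (forall i, (1 <= i)%nat -> (i + 1 <= m)%nat -> c i <> 0) ->
  (forall n, in_range m n ->
     Rabs (sr n - INR n * (INR n + 1)) <= 1/2 /\ shoot c (sr n) m = 0) ->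
  forall s, shoot c s m = 0 -> exists n, in_range m n /\ s = sr n.
Proof.
  intros Hm Hcnz Hsr s Hs0.
  destruct (shoot_poly m c Hcnz (m - 1) ltac:(lia)) as (a & Ha & Hpoly & _).
  replace (S (m - 1)) with m in Hpoly by lia.
  assert (Hinj : forall n1 n2, (1 <= n1 <= m - 1)%nat -> (1 <= n2 <= m - 1)%nat ->
    sr n1 = sr n2 -> n1 = n2).
  { intros n1 n2 H1 H2 E.
    destruct (Hsr n1 H1) as [B1 _]. destruct (Hsr n2 H2) as [B2 _].
    apply Rabs_le_inv in B1. apply Rabs_le_inv in B2.
    destruct (Nat.lt_total n1 n2) as [L|[L|L]]; auto; exfalso.
    - pose proof (pronic_gap n1 n2 ltac:(lia) L). lra.
    - pose proof (pronic_gap n2 n1 ltac:(lia) L). lra. }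
  exact (poly_fun_roots_exhaust (m - 1) _ a sr Hpoly Ha Hinj (fun n Hn => proj2 (Hsr n Hn)) s Hs0).
Qed.

Lemma perturbed_spectrum m : (2 <= m)%nat -> exists K eta0, 0 < K /\ 0 < eta0 <= 1/2 /\
  forall c eta, 0 < eta <= eta0 -> coef_close m c eta ->
  exists sr : nat -> R,
    (forall n, in_range m n -> Rabs (sr n - INR n * (INR n + 1)) <= K * eta) /\
    (forall s, shoot c s m = 0 <-> exists n, in_range m n /\ s = sr n).
Proof.
  intros Hm. destruct (perturbed_zeros_exist m Hm) as (K & eta0 & HK & Heta0 & HKeta0 & Hzero).
  exists K, eta0. split; [auto|split; [auto|]]. intros c eta Heta Hc.
  destruct (choose_in_range m _ (Hzero c eta Heta Hc)) as (sr & Hsr).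
  exists sr. split; [intros n Hn; apply Hsr; auto|]. intros s. split.
  - apply perturbed_zeros_exhaust; auto.
    + intros i H1 H2. pose proof (coef_close_ge m c eta ltac:(lra) Hc i H1 H2). lra.
    + intros n Hn. destruct (Hsr n Hn) as [B Z]. split; auto.
      assert (K * eta <= K * eta0) by (apply Rmult_le_compat_l; lra). lra.
  - intros (n & Hn & ->). apply Hsr; auto.
Qed.

Lemma scaled_eigenvalues m : (2 <= m)%nat -> exists K eta0, 0 < K /\ 0 < eta0 /\
  forall (w : nat -> R) L eta, 0 < L -> 0 < eta <= eta0 ->
  coef_close m (fun i => 2 * w i / L) eta ->
  exists om : nat -> R,
    (forall lam, is_eigenvalue m w lam <-> exists n, in_range m n /\ lam = om n) /\
    (forall n, in_range m n -> Rabs (om n - (2 + L * (INR n * (INR n + 1)))) <= L * (K * eta)).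
Proof.
  intros Hm. destruct (perturbed_spectrum m Hm) as (K & eta0 & HK & Heta0 & Hspec).
  exists K, eta0. split; [auto|split; [lra|]]. intros w L eta HL Heta Hc.
  assert (Hwpos : forall j, in_range m j -> 0 < w j).
  { intros j [H1 H2].
    pose proof (coef_close_ge m _ eta ltac:(lra) Hc j H1 ltac:(lia)) as Hj. simpl in Hj.
    apply (Rmult_lt_reg_r (2 / L)); [apply Rdiv_lt_0_compat; lra|].
    replace (w j * (2 / L)) with (2 * w j / L) by (field; lra). lra. }
  destruct (Hspec _ eta Heta Hc) as (sr & Hsr & Hroots).
  exists (fun n => 2 + L * sr n). split.
  - intros lam. rewrite (eigenvalue_iff_shoot m w L lam Hm HL Hwpos), Hroots.
    split; intros (n & Hn & E); exists n; split; auto.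
    + rewrite <- E. field. lra.
    + rewrite E. field. lra.
  - intros n Hn.
    replace (2 + L * sr n - (2 + L * (INR n * (INR n + 1))))
      with (L * (sr n - INR n * (INR n + 1))) by ring.
    rewrite Rabs_mult, (Rabs_right L) by lra.
    apply Rmult_le_compat_l; [lra|]. apply Hsr; auto.
Qed.

Lemma scaled_weights_close m y L M : (2 <= m)%nat -> 0 < L -> 0 <= M ->
  (forall i, in_range m i -> Rabs (y i - L) <= M) ->
  coef_close m (fun i => 2 * Ainv m y i / L) (4 * INR m * INR m * M / L).
Proof.
  intros Hm HL HM Hy i H1 H2.
  pose proof (Ainv_near_const m y L M Hm HM Hy i ltac:(split; lia)) as Hw.
  replace (2 * Ainv m y i / L - cbase m i)
    with (2 / L * (Ainv m y i - L * Ainv_one_vec m i))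
    by (unfold cbase, Ainv_one_vec; field; lra).
  rewrite Rabs_mult, Rabs_right by (apply Rle_ge, Rlt_le, Rdiv_lt_0_compat; lra).
  replace (4 * INR m * INR m * M / L) with (2 / L * (2 * INR m * INR m * M)) by (field; lra).
  apply Rmult_le_compat_l; auto. apply Rlt_le, Rdiv_lt_0_compat; lra.
Qed.

Definition log_scale (eps : R) : R := - 2 * ln eps - ln (Rabs (ln eps)) + 2 * ln 2.

(* L(eps) -> +oo as eps -> 0+, using log t <= t - 1 for t = |log eps|. *)
Lemma log_scale_large T : exists d, d > 0 /\ forall eps, 0 < eps < d -> T < log_scale eps.
Proof.
  exists (Rmin (exp (-1)) (exp (- T))). split; [apply Rmin_pos; apply exp_pos|].
  intros eps [H0 H1]. pose proof (Rmin_l (exp (-1)) (exp (- T))).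
  pose proof (Rmin_r (exp (-1)) (exp (- T))).
  assert (A1 : ln eps < -1) by (rewrite <- (ln_exp (-1)); apply ln_increasing; lra).
  assert (A2 : ln eps < - T) by (rewrite <- (ln_exp (-T)); apply ln_increasing; lra).
  unfold log_scale. rewrite Rabs_left by lra.
  pose proof (exp_ineq1_le (ln (- ln eps))) as E. rewrite exp_ln in E by lra.
  pose proof ln_lt_2. lra.
Qed.

Lemma finite_bound (f : nat -> R) N : exists M, 0 <= M /\ forall j, (j <= N)%nat -> Rabs (f j) <= M.
Proof.
  induction N.
  - exists (Rabs (f 0%nat)). split; [apply Rabs_pos|]. intros j Hj. replace j with 0%nat by lia. lra.
  - destruct IHN as (M & HM & H). exists (Rmax M (Rabs (f (S N)))). split.
    + eapply Rle_trans; [apply HM|apply Rmax_l].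
    + intros j Hj. destruct (Nat.eq_dec j (S N)) as [->|E]; [apply Rmax_r|].
      eapply Rle_trans; [apply H; lia|apply Rmax_l].
Qed.

Lemma x_near_scale m (x : R -> nat -> R) : (2 <= m)%nat ->
  (forall j, in_range m j -> forall e, e > 0 -> exists d, d > 0 /\ forall eps, 0 < eps < d ->
     Rabs (x eps j - (log_scale eps - ln (Ainv m (fun _ => 1) j))) < e) ->
  exists M d, 0 <= M /\ d > 0 /\ forall eps, 0 < eps < d ->
    forall j, in_range m j -> Rabs (x eps j - log_scale eps) <= M.
Proof.
  intros Hm Hx.
  destruct (finite_bound (fun j => ln (Ainv_one_vec m j)) m) as (Ml & HMl0 & HMl).
  destruct (finite_min m (fun j d => forall eps, 0 < eps < d ->
    Rabs (x eps j - (log_scale eps - ln (Ainv m (fun _ => 1) j))) < 1)) as (d & Hd & Hxd).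
  { intros j k k' Hk HP eps Heps. apply HP. lra. }
  { intros j Hj. destruct (Hx j Hj 1 ltac:(lra)) as (d & Hd & H). exists d. auto. }
  exists (Ml + 1), d. split; [lra|split; [lra|]]. intros eps Heps j Hj.
  pose proof (Hxd j Hj eps Heps) as Hxj. rewrite Ainv_one in Hxj by auto.
  pose proof (HMl j ltac:(destruct Hj; lia)) as Hl. simpl in Hl.
  apply Rabs_le_inv in Hl. apply Rabs_def2 in Hxj. apply Rabs_le. lra.
Qed.

Theorem lemma6 (m : nat) (hm : (2 <= m)%nat) (x : R -> nat -> R)
  (hx_eq : exists d, d > 0 /\ forall eps, 0 < eps < d ->
      forall j, in_range m j ->
        exp (- x eps j) = eps ^ 2 / 8 * Ainv m (x eps) j)
  (hx_asym : forall j, in_range m j ->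
      forall e, e > 0 -> exists d, d > 0 /\ forall eps, 0 < eps < d ->
        Rabs (x eps j - (- 2 * ln eps - ln (Rabs (ln eps)) + 2 * ln 2
                         - ln (Ainv m (fun _ => 1) j))) < e) :
  exists C d, d > 0 /\ forall eps, 0 < eps < d ->
    exists om : nat -> R,
      (forall lam, is_eigenvalue m (Ainv m (x eps)) lam <->
                   exists n, in_range m n /\ lam = om n) /\
      (forall n, in_range m n ->
         Rabs (om n - (2 + (- 4 * ln eps - 2 * ln (Rabs (ln eps)) + 4 * ln 2)
                          * (INR (n * (n + 1)) / 2))) <= C).
Proof.
  destruct (x_near_scale m x hm hx_asym) as (M & d1 & HM & Hd1 & Hnear).
  destruct (scaled_eigenvalues m hm) as (K & eta0 & HK & Heta0 & Heig).
  set (K0 := 4 * INR m * INR m * M + 1).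
  assert (HK0 : 0 < K0) by (pose proof (pos_INR m); unfold K0; nra).
  destruct (log_scale_large (K0 / eta0)) as (d2 & Hd2 & Hlarge).
  exists (K * K0), (Rmin d1 d2). split; [apply Rmin_pos; lra|].
  intros eps Heps. pose proof (Rmin_l d1 d2). pose proof (Rmin_r d1 d2).
  set (L := log_scale eps).
  assert (HL : K0 / eta0 < L) by (apply Hlarge; lra).
  assert (HLpos : 0 < L) by (pose proof (Rdiv_lt_0_compat K0 eta0 HK0 Heta0); lra).
  assert (Heta : 0 < K0 / L <= eta0).
  { split; [apply Rdiv_lt_0_compat; lra|].
    apply (Rmult_lt_compat_r eta0) in HL; [|lra]. field_simplify in HL; [|lra].
    apply (Rmult_le_reg_r L); [lra|]. field_simplify; lra. }
  assert (Hc : coef_close m (fun i => 2 * Ainv m (x eps) i / L) (K0 / L)).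
  { intros i H1 H2. eapply Rle_trans.
    - apply (scaled_weights_close m (x eps) L M hm HLpos HM); auto.
      intros j Hj. apply Hnear; auto. lra.
    - apply Rmult_le_compat_r; [apply Rlt_le, Rinv_0_lt_compat|unfold K0]; lra. }
  destruct (Heig _ L _ HLpos Heta Hc) as (om & Hspec & Hbound).
  exists om. split; auto. intros n Hn.
  (* 2 L = -4 log eps - 2 log|log eps| + 4 log 2 *)
  rewrite mult_INR, plus_INR. simpl (INR 1).
  replace (2 + (-4 * ln eps - 2 * ln (Rabs (ln eps)) + 4 * ln 2) * (INR n * (INR n + 1) / 2))
    with (2 + L * (INR n * (INR n + 1))) by (unfold L, log_scale; field).
  replace (K * K0) with (L * (K * (K0 / L))) by (field; lra). auto.
Qed.
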